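(* Let $L$ be a multisorted algebra in the first order signature without equality. Then $L$ satisfies axioms (0)–(10) if and only if $L$ is isomorphic to a subalgebra of the first order algebra (without equality) $A(W)$ of some set $W$.
   Context: Throughout, the Boolean prime ideal theorem is assumed. Signature. There is a sort $n$ for each natural number $n\ge0$. For every function $\alpha\colon\{1,\dots,n\}\to\{1,\dots,k\}$ there is a unary function symbol (''substitution'') $\alpha\colon n\to k$ (argument of sort $n$, value of sort $k$). Each sort has constants $0,1$, binary $\vee,\wedge$, unary $\neg$; for each $n$ there is $\exists\colon n+1\to n$. For substitutions $\alpha\colon k\to n$, $\beta\colon n\to m$, $\beta\circ\alpha\colon k\to m$ is the substitution symbol of the composite function; $\beta(\alpha(r))$ is composition in an algebra; $\mathrm{id}$ is the identity substitution. The associated cylindrification of $\exists\colon n+1\to n$ is $c\colon n\to n+1$, $c(i)=i$; $\exists^{(n)}$ is $n$-fold projection. Concrete algebras. For a set $W$: $\alpha^{\mathrm{tuple}}(x_1,\dots,x_k)=(x_{\alpha(1)},\dots,x_{\alpha(n)})$, $\alpha^{\mathrm{relation}}(r)=\{\bar x\in W^k:\alpha^{\mathrm{tuple}}(\bar x)\in r\}$. The first order algebra $A(W)$ (without equality) interprets sort $n$ as $\mathcal P(W^n)$, $\alpha$ as $\alpha^{\mathrm{relation}}$, $0,1,\vee,\wedge,\neg$ as $\emptyset,W^n,\cup,\cap$, complement in $W^n$, and $\exists(r)=\{(x_1,\dots,x_n):\exists y\,(x_1,\dots,x_n,y)\in r\}$. Partitioning cylindrifications: for $k_1,\dots,k_m$,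 $n=\sum k_j$, the substitutions $c_i\colon k_i\to n$, $c_i(l)=l+\sum_{j<i}k_j$. $x\le y$ (also $y\ge x$) means $x=x\wedge y$. Axioms: (0) For partitioning cylindrifications $c_1,\dots,c_m$ and $r_i,s_i$ of sort $k_i$: if $\bigvee_i c_i(s_i)\ge\bigwedge_i c_i(r_i)$ then $s_i\ge r_i$ for some $i$ (including $m=0$: $0\ge1$ fails in sort $0$). (1) Each sort is a bounded distributive lattice. (2) Substitutions preserve $0,1,\vee,\wedge$. (3) $(\beta\circ\alpha)(r)=\beta(\alpha(r))$. (4) $\mathrm{id}(r)=r$. (5) $\alpha(\neg r)=\neg\alpha(r)$. (6) $r\vee\neg r=1$, $r\wedge\neg r=0$. (7) $\exists(0)=0$, $\exists(r\vee s)=\exists(r)\vee\exists(s)$. (8) $r\le c(\exists(r))$. (9) $\exists(r\wedge c(s))=\exists(r)\wedge s$. (10) For substitutions $\alpha_i\colon k_i\to m$ ($i=1,\dots,n$), let $\beta_i\colon k_i+1\to m+n$ with $\beta_i(j)=\alpha_i(j)$ for $j\le k_i$ and $\beta_i(k_i+1)=m+i$. Then for all $r_i$ of sort $k_i+1$: $\exists^{(n)}(\bigwedge_i\beta_i(r_i))=\bigwedge_i\alpha_i(\exists(r_i))$. *)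

From mathcomp Require Import all_boot.
Set Implicit Arguments. Unset Strict Implicit. Unset Printing Implicit Defensive.

(* A substitution symbol alpha : n -> k is given by a
   function alpha : 'I_n -> 'I_k (0-indexed version of {1..n} -> {1..k}),
   acting from sort n to sort k.  [ex n] : sort n.+1 -> sort n.            *)
Record msalg := MSAlg {
  car : nat -> Type;
  sub : forall n k : nat, ('I_n -> 'I_k) -> car n -> car k;
  zero : forall n, car n;
  one : forall n, car n;
  join : forall n, car n -> car n -> car n;
  meet : forall n, car n -> car n -> car n;
  neg : forall n, car n -> car n;
  ex : forall n, car n.+1 -> car n
}.
Arguments sub {m} {n k} _ _.
Arguments zero {m} n.
Arguments one {m} n.
Arguments join {m} {n} _ _.
Arguments meet {m} {n} _ _.
Arguments neg {m} {n} _.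
Arguments ex {m} {n} _.

Section FOLaws.
Variable L : msalg.

Definition le n (x y : car L n) : Prop := x = meet x y.

Definition cyl n : 'I_n -> 'I_n.+1 := widen_ord (leqnSn n).

Definition bigmeet p m (f : 'I_m -> car L p) : car L p :=
  \big[@meet L p / one p]_(i < m) f i.
Definition bigjoin p m (f : 'I_m -> car L p) : car L p :=
  \big[@join L p / zero p]_(i < m) f i.

Fixpoint exn m n : car L (m + n) -> car L m :=
  match n return car L (m + n) -> car L m with
  | 0 => fun r => ecast i (car L i) (addn0 m) r
  | n'.+1 => fun r => @exn m n' (ex (ecast i (car L i) (addnS m n') r))
  end.

Lemma part_cyl_subproof m (k : 'I_m -> nat) (i : 'I_m) (l : 'I_(k i)) :
  l + \sum_(j < m | j < i) k j < \sum_(j < m) k j.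
Proof.
rewrite [X in _ < X](bigID (fun j : 'I_m => j < i)) /= [l + _]addnC ltn_add2l.
rewrite (bigD1 i) ?ltnn //=; exact: (leq_trans (ltn_ord l) (leq_addr _ _)).
Qed.

Definition part_cyl m (k : 'I_m -> nat) (i : 'I_m) :
  'I_(k i) -> 'I_(\sum_(j < m) k j) :=
  fun l => Ordinal (part_cyl_subproof l).

(* beta_i of axiom (10): beta(j) = alpha(j) for j <= k, beta(k+1) = m+i *)
Definition beta10 m n k (alpha : 'I_k -> 'I_m) (i : 'I_n) :
  'I_k.+1 -> 'I_(m + n) :=
  fun j => match unlift ord_max j with
           | Some j' => @lshift m n (alpha j')
           | None => @rshift m n i
           end.

Definition ax0 : Prop :=
  forall (m : nat) (k : 'I_m -> nat)
         (r s : forall i : 'I_m, car L (k i)),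
    le (bigmeet (fun i => sub (@part_cyl m k i) (r i)))
       (bigjoin (fun i => sub (@part_cyl m k i) (s i))) ->
    exists i : 'I_m, le (r i) (s i).

Definition ax1 : Prop := forall n (x y z : car L n),
  ((join x (join y z) = join (join x y) z) /\
      (meet x (meet y z) = meet (meet x y) z) /\
      (join x y = join y x) /\
      (meet x y = meet y x) /\
      (join x (meet x y) = x) /\
      (meet x (join x y) = x) /\
      (meet x (join y z) = join (meet x y) (meet x z)) /\
      (join x (@zero L n) = x) /\
      (meet x (@one L n) = x)).

Definition ax2 : Prop := forall n k (alpha : 'I_n -> 'I_k) (x y : car L n),
  ((sub alpha (@zero L n) = @zero L k) /\
      (sub alpha (@one L n) = @one L k) /\
      (sub alpha (join x y) = join (sub alpha x) (sub alpha y)) /\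
      (sub alpha (meet x y) = meet (sub alpha x) (sub alpha y))).

Definition ax3 : Prop := forall k n m (alpha : 'I_k -> 'I_n)
  (beta : 'I_n -> 'I_m) (r : car L k),
  sub (fun i => beta (alpha i)) r = sub beta (sub alpha r).

Definition ax4 : Prop := forall n (r : car L n), sub id r = r.

Definition ax5 : Prop := forall n k (alpha : 'I_n -> 'I_k) (r : car L n),
  sub alpha (neg r) = neg (sub alpha r).

Definition ax6 : Prop := forall n (r : car L n),
  join r (neg r) = @one L n /\ meet r (neg r) = @zero L n.

Definition ax7 : Prop := forall n (r s : car L n.+1),
  ex (@zero L n.+1) = @zero L n /\ ex (join r s) = join (ex r) (ex s).

Definition ax8 : Prop := forall n (r : car L n.+1), le r (sub (@cyl n) (ex r)).

Definition ax9 : Prop := forall n (r : car L n.+1) (s : car L n),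
  ex (meet r (sub (@cyl n) s)) = meet (ex r) s.

Definition ax10 : Prop :=
  forall (m n : nat) (k : 'I_n -> nat)
         (alpha : forall i : 'I_n, 'I_(k i) -> 'I_m)
         (r : forall i : 'I_n, car L (k i).+1),
    @exn m n (bigmeet (fun i => sub (beta10 (alpha i) i) (r i)))
    = bigmeet (fun i => sub (alpha i) (ex (r i))).

Definition fo_axioms : Prop :=
  ((ax0) /\
      (ax1) /\
      (ax2) /\
      (ax3) /\
      (ax4) /\
      (ax5) /\
      (ax6) /\
      (ax7) /\
      (ax8) /\
      (ax9) /\
      (ax10)).

End FOLaws.

(* The first order algebra A(W) without equality: sort n is P(W^n),
   with W^n = 'I_n -> W and relations as predicates.                   *)
Definition rel (W : Type) n := ('I_n -> W) -> Prop.

Definition ext W n (x : 'I_n -> W) (y : W) : 'I_n.+1 -> W :=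
  fun i => match unlift ord_max i with Some j => x j | None => y end.

Definition subst_rel W n k (alpha : 'I_n -> 'I_k) (r : rel W n) : rel W k :=
  fun x => r (fun i => x (alpha i)).
Definition ex_rel W n (r : rel W n.+1) : rel W n :=
  fun x => exists y, r (ext x y).

(* f is an injective homomorphism L -> A(W), i.e. an isomorphism of L
   onto the subalgebra f(L) of A(W). *)
Definition embeds_into (L : msalg) (W : Type) (f : forall n, car L n -> rel W n)
  : Prop :=
  (((forall n (r s : car L n), f n r = f n s -> r = s)) /\
      ((forall n k (alpha : 'I_n -> 'I_k) (r : car L n),
          f k (sub alpha r) = subst_rel alpha (f n r))) /\
      ((forall n, f n (zero n) = (fun _ => False))) /\
      ((forall n, f n (one n) = (fun _ => True))) /\
      ((forall n (r s : car L n), f n (join r s) = (fun x => f n r x \/ f n s x))) /\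
      ((forall n (r s : car L n), f n (meet r s) = (fun x => f n r x /\ f n s x))) /\
      ((forall n (r : car L n), f n (neg r) = (fun x => ~ f n r x))) /\
      ((forall n (r : car L n.+1), f n (ex r) = ex_rel (f n.+1 r)))).

Definition represents_in_FO_algebra (L : msalg) : Prop :=
  exists (W : Type) (f : forall n, car L n -> rel W n), embeds_into f.

From mathcomp Require Import all_boot boolp.
From mathcomp Require classical_sets.
From mathcomp Require Import zify.
From Stdlib Require List.
From Pilot Require Import Defs.
Set Implicit Arguments. Unset Strict Implicit. Unset Printing Implicit Defensive.

(* Soundness: the laws (0)-(10) hold in A(W) by direct computation and
   transfer along an embedding.

   Completeness: axiom (0) makes sort 0 the two-element algebra.  If sort 1 is
   trivial, so is every positive sort, and L embeds into A of the empty set.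
   Otherwise we build a Henkin term model.  Terms are formal witnesses
   c(a, w) for a of sort n+1 and n terms w; a formula a(w) is read in L after
   identifying repeated arguments.  Axiom (10) makes the existential quantifier
   commute with substitutions, so a Henkin axiom  ex a(w) -> a(w, c(a, w))
   whose witness is fresh keeps a consistent formula consistent; adding them by
   decreasing height of the witness shows that all Henkin axioms together are
   consistent.  A maximal consistent filter containing them (Zorn) interprets L
   by relations on terms, and the interpretation is injective because every
   nonzero element is realised, which reduces along ex to sort 0. *)

Definition nil_fun T (i : 'I_0) : T. Proof. by case: i. Defined.

Definition cat_fun T m n (u : 'I_m -> T) (v : 'I_n -> T) : 'I_(m + n) -> T :=
  fun j => match split j with inl i => u i | inr i => v i end.

Lemma cat_fun_lshift T m n (u : 'I_m -> T) (v : 'I_n -> T) i :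
  cat_fun u v (lshift n i) = u i.
Proof. by rewrite /cat_fun (unsplitK (inl i)). Qed.

Lemma cat_fun_rshift T m n (u : 'I_m -> T) (v : 'I_n -> T) i :
  cat_fun u v (rshift m i) = v i.
Proof. by rewrite /cat_fun (unsplitK (inr i)). Qed.

Lemma cat_funP T m n (u : 'I_m -> T) (v : 'I_n -> T) (P : T -> Prop) j :
  (forall i, P (u i)) -> (forall i, P (v i)) -> P (cat_fun u v j).
Proof. by rewrite /cat_fun; case: (split j). Qed.

Lemma cyl_lift n (j : 'I_n) : cyl j = lift ord_max j.
Proof. by apply: ord_inj; rewrite lift_max. Qed.

Lemma cyl_or_max n (j : 'I_n.+1) : j = ord_max \/ exists j', j = cyl j'.
Proof.
by case: (unliftP ord_max j) => [j'|] ->; [right; exists j'; rewrite cyl_lift | left].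
Qed.

Lemma ext_cyl T n (x : 'I_n -> T) y j : ext x y (cyl j) = x j.
Proof. by rewrite /ext cyl_lift liftK. Qed.

Lemma ext_max T n (x : 'I_n -> T) y : ext x y ord_max = y.
Proof. by rewrite /ext unlift_none. Qed.

Lemma ext_eta T n (w : 'I_n.+1 -> T) : ext (fun j => w (cyl j)) (w ord_max) = w.
Proof.
apply: funext => j; case: (cyl_or_max j) => [->|[j' ->]]; first exact: ext_max.
exact: ext_cyl.
Qed.

Lemma ext_cat_fun T m n (w : 'I_m -> T) (y : 'I_n -> T) z :
  (fun j => ext (cat_fun w y) z (cast_ord (addnS m n) j)) = cat_fun w (ext y z).
Proof.
apply: funext => j; case: (splitP j) => [i|k] ji.
  rewrite (_ : j = lshift _ i) ?cat_fun_lshift; last exact: ord_inj.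
  rewrite (_ : cast_ord _ _ = cyl (lshift n i)) ?ext_cyl ?cat_fun_lshift //.
  exact: ord_inj.
rewrite (_ : j = rshift m k) ?cat_fun_rshift; last exact: ord_inj.
case: (cyl_or_max k) => [->|[k' ->]].
  by rewrite (_ : cast_ord _ _ = ord_max) ?ext_max //; apply: ord_inj => /=; lia.
rewrite (_ : cast_ord _ _ = cyl (rshift m k')) ?ext_cyl ?cat_fun_rshift //.
exact: ord_inj.
Qed.

Lemma beta10_ext T m n k (alpha : 'I_k -> 'I_m) (i : 'I_n) (w : 'I_m -> T) y :
  (fun j => cat_fun w y (beta10 alpha i j)) = ext (fun j => w (alpha j)) (y i).
Proof.
apply: funext => j; rewrite /beta10 /ext.
by case: (unlift ord_max j) => [j'|]; [rewrite cat_fun_lshift | rewrite cat_fun_rshift].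
Qed.

Lemma part_cyl_sum_mono m (k : 'I_m -> nat) (i i' : 'I_m) : i < i' ->
  \sum_(j < m | j < i) k j + k i <= \sum_(j < m | j < i') k j.
Proof.
move=> lt_ii'; rewrite [X in _ <= X](bigID (fun j : 'I_m => j < i)) /=.
have -> : \sum_(j < m | (j < i') && (j < i)) k j = \sum_(j < m | j < i) k j.
  apply: eq_bigl => j; apply/andP/idP => [[]//|lt_ji]; split => //.
  exact: ltn_trans lt_ji lt_ii'.
by rewrite leq_add2l (bigD1 i) /= ?lt_ii' ?ltnn // leq_addr.
Qed.

Lemma part_cyl_inj m (k : 'I_m -> nat) :
  injective (fun il : {i : 'I_m & 'I_(k i)} => part_cyl (tagged il)).
Proof.
have lt_part (i i' : 'I_m) (l : 'I_(k i)) (l' : 'I_(k i')) : i < i' ->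
    l + \sum_(j < m | j < i) k j < l' + \sum_(j < m | j < i') k j.
  move=> lt_ii'; apply: leq_trans (leq_addl l' _).
  by apply: leq_trans (part_cyl_sum_mono k lt_ii'); rewrite addnC ltn_add2l.
move=> [i l] [i' l'] /(congr1 val) /= e.
have ii' : i = i'.
  case: (ltngtP i i') => [lt_ii'|lt_i'i|/val_inj //].
    by move: (lt_part _ _ l l' lt_ii'); rewrite e ltnn.
  by move: (lt_part _ _ l' l lt_i'i); rewrite e ltnn.
subst i'; congr existT; apply: ord_inj; lia.
Qed.

Lemma part_cyl_left_inverse m (k : 'I_m -> nat) :
  exists g : 'I_(\sum_(i < m) k i) -> {i : 'I_m & 'I_(k i)},
    forall i (l : 'I_(k i)), g (part_cyl l) = Tagged _ l.
Proof.
have card_tag : #|{: {i : 'I_m & 'I_(k i)}}| = \sum_(i < m) k i.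
  rewrite card_tagged sumnE big_map big_enum /=.
  by apply: eq_big => [i|i _]; [rewrite inE | rewrite card_ord].
have card_le : #|'I_(\sum_(i < m) k i)| <= #|{: {i : 'I_m & 'I_(k i)}}|.
  by rewrite card_ord card_tag.
have [g gK _] := inj_card_bij (@part_cyl_inj m k) card_le.
by exists g => i l; exact: (gK (Tagged _ l)).
Qed.

Section Soundness.
Variables (L : msalg) (W : Type) (f : forall n, car L n -> rel W n).
Arguments f : clear implicits.
Hypothesis f_emb : embeds_into f.

Lemma f_sub n k (a : 'I_n -> 'I_k) (r : car L n) w :
  f k (sub a r) w = f n r (fun i => w (a i)).
Proof. by case: f_emb => _ [-> _]. Qed.
Lemma f_zero n w : f n (zero n) w = False.
Proof. by case: f_emb => _ [_ [-> _]]. Qed.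
Lemma f_one n w : f n (one n) w = True.
Proof. by case: f_emb => _ [_ [_ [-> _]]]. Qed.
Lemma f_join n (r s : car L n) w : f n (join r s) w = (f n r w \/ f n s w).
Proof. by case: f_emb => _ [_ [_ [_ [-> _]]]]. Qed.
Lemma f_meet n (r s : car L n) w : f n (meet r s) w = (f n r w /\ f n s w).
Proof. by case: f_emb => _ [_ [_ [_ [_ [-> _]]]]]. Qed.
Lemma f_neg n (r : car L n) w : f n (neg r) w = ~ f n r w.
Proof. by case: f_emb => _ [_ [_ [_ [_ [_ [-> _]]]]]]. Qed.
Lemma f_ex n (r : car L n.+1) w : f n (ex r) w = exists y, f n.+1 r (ext w y).
Proof. by case: f_emb => _ [_ [_ [_ [_ [_ [_ ->]]]]]]. Qed.

Lemma f_eq n (r s : car L n) : (forall w, f n r w <-> f n s w) -> r = s.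
Proof.
by case: f_emb => f_inj _ rs; apply: f_inj; apply: funext => w; apply: propext.
Qed.

Lemma f_leP n (r s : car L n) : le r s <-> forall w, f n r w -> f n s w.
Proof.
split=> [-> w|rs]; first by rewrite f_meet; case.
by apply: f_eq => w; rewrite f_meet; split=> [fr|[]//]; split=> //; apply: rs.
Qed.

Lemma f_cast p q (e : p = q) (X : car L p) w :
  f q (ecast i (car L i) e X) w = f p X (fun j => w (cast_ord e j)).
Proof.
by move: w; case: q / e => w /=; congr (f _ X); apply: funext => j; rewrite cast_ord_id.
Qed.

Lemma f_exn m n (X : car L (m + n)) w :
  f m (exn X) w <-> exists y : 'I_n -> W, f (m + n) X (cat_fun w y).
Proof.
elim: n X => [|n IH] X /=.
  have cat0 (y : 'I_0 -> W) : cat_fun w y = (fun j => w (cast_ord (addn0 m) j)).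
    apply: funext => j; case: (splitP j) => [i ji|[]//].
    rewrite (_ : j = lshift 0 i) ?cat_fun_lshift; last exact: ord_inj.
    by congr w; apply: ord_inj.
  by rewrite f_cast; split=> [fX|[y]]; [exists (@nil_fun W) | ]; rewrite cat0.
rewrite IH; split=> [[y]|[y fX]].
  by rewrite f_ex => -[z]; rewrite f_cast ext_cat_fun; exists (ext y z).
exists (fun j => y (cyl j)); rewrite f_ex; exists (y ord_max).
by rewrite f_cast ext_cat_fun ext_eta.
Qed.

Lemma f_bigmeet p m (G : 'I_m -> car L p) w :
  f p (bigmeet G) w <-> forall i, f p (G i) w.
Proof.
elim: m G => [|m IH] G; rewrite /bigmeet.
  by rewrite big_ord0 f_one; split => // _; case.
rewrite big_ord_recl f_meet -/(bigmeet _) IH; split=> [[G0 GS] i|GP].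
  by case: (unliftP ord0 i) => [i'|] ->.
by split=> [|i]; apply: GP.
Qed.

Lemma f_bigjoin p m (G : 'I_m -> car L p) w :
  f p (bigjoin G) w <-> exists i, f p (G i) w.
Proof.
elim: m G => [|m IH] G; rewrite /bigjoin.
  by rewrite big_ord0 f_zero; split => // -[] [].
rewrite big_ord_recl f_join -/(bigjoin _) IH; split.
  by case=> [G0|[i Gi]]; [exists ord0 | exists (lift ord0 i)].
by case=> i; case: (unliftP ord0 i) => [i'|] -> Gi; [right; exists i' | left].
Qed.

Lemma embedding_ax0 : ax0 L.
Proof.
move=> m k r s rs; apply: contrapT => no_le.
have wit i : exists x, f _ (r i) x /\ ~ f _ (s i) x.
  apply: contrapT => no_wit; apply: no_le; exists i; apply/f_leP => x fr.
  by apply: contrapT => fs; apply: no_wit; exists x.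
pose x i := proj1_sig (cid (wit i)).
(* The failure witness for the [i]-th conjunct fills the [i]-th block of coordinates. *)
have [g gK] := part_cyl_left_inverse k.
pose w j := x (tag (g j)) (tagged (g j)).
have wK i : (fun l => w (part_cyl l)) = x i by apply: funext => l; rewrite /w gK.
have /f_bigjoin [i] : f _ (bigjoin (fun i => sub (part_cyl (i := i)) (s i))) w.
  apply: (proj1 (f_leP _ _) rs); apply/f_bigmeet => i.
  by rewrite f_sub wK; exact: (proj1 (proj2_sig (cid (wit i)))).
by rewrite f_sub wK; exact: (proj2 (proj2_sig (cid (wit i)))).
Qed.

Lemma embedding_ax1 : ax1 L.
Proof.
by move=> n x y z; do !split; apply: f_eq => w;
  rewrite ?f_join ?f_meet ?f_join ?f_zero ?f_one; tauto.
Qed.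

Lemma embedding_ax2 : ax2 L.
Proof.
by move=> n k a x y; do !split; apply: f_eq => w;
  rewrite !f_sub ?f_zero ?f_one ?f_join ?f_meet ?f_sub.
Qed.

Lemma embedding_ax3 : ax3 L.
Proof. by move=> k n m a b r; apply: f_eq => w; rewrite !f_sub. Qed.

Lemma embedding_ax4 : ax4 L.
Proof. by move=> n r; apply: f_eq => w; rewrite !f_sub. Qed.

Lemma embedding_ax5 : ax5 L.
Proof. by move=> n k a r; apply: f_eq => w; rewrite f_sub !f_neg f_sub. Qed.

Lemma embedding_ax6 : ax6 L.
Proof.
move=> n r; split; apply: f_eq => w; rewrite ?f_join ?f_meet f_neg ?f_zero ?f_one.
  by split=> // _; case: (pselect (f n r w)); [left | right].
by tauto.
Qed.

Lemma embedding_ax7 : ax7 L.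
Proof.
move=> n r s; split; apply: f_eq => w; rewrite ?f_ex ?f_zero ?f_join ?f_ex.
  by split=> [[y]|//]; rewrite f_zero.
split; first by case=> y; rewrite f_join => -[h|h]; [left|right]; exists y.
by case=> -[y h]; exists y; rewrite f_join; [left|right].
Qed.

Lemma embedding_ax8 : ax8 L.
Proof.
move=> n r; apply/f_leP => w fr; rewrite f_sub f_ex.
by exists (w ord_max); rewrite ext_eta.
Qed.

Lemma embedding_ax9 : ax9 L.
Proof.
move=> n r s; apply: f_eq => w; rewrite f_ex f_meet f_ex.
have ext_cylE y : (fun j => ext w y (cyl j)) = w by apply: funext => j; rewrite ext_cyl.
split; first by case=> y; rewrite f_meet f_sub ext_cylE => -[fr fs]; split=> //; exists y.
by case=> -[y fr] fs; exists y; rewrite f_meet f_sub ext_cylE.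
Qed.

Lemma embedding_ax10 : ax10 L.
Proof.
move=> m n k al r; apply: f_eq => w; rewrite f_exn f_bigmeet; split.
  case=> y /f_bigmeet fr i; rewrite f_sub f_ex; exists (y i).
  by move: (fr i); rewrite f_sub beta10_ext.
move=> fr; have wit i : exists z, f _ (r i) (ext (fun j => w (al i j)) z).
  by move: (fr i); rewrite f_sub f_ex.
exists (fun i => proj1_sig (cid (wit i))); apply/f_bigmeet => i.
by rewrite f_sub beta10_ext; exact: (proj2_sig (cid (wit i))).
Qed.

Lemma embedding_fo_axioms : fo_axioms L.
Proof.
split; [exact: embedding_ax0|]; split; [exact: embedding_ax1|].
split; [exact: embedding_ax2|]; split; [exact: embedding_ax3|].
split; [exact: embedding_ax4|]; split; [exact: embedding_ax5|].
split; [exact: embedding_ax6|]; split; [exact: embedding_ax7|].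
split; [exact: embedding_ax8|]; split; [exact: embedding_ax9|].
exact: embedding_ax10.
Qed.

End Soundness.

Lemma length_filter_lt T (p : T -> bool) (l : seq T) t :
  List.In t l -> ~~ p t -> length (List.filter p l) < length l.
Proof.
elim: l => //= x l IH [<-|tl] pt.
  by rewrite (negbTE pt) ltnS; apply/leP; exact: List.filter_length_le.
by case: (p x) => /=; [rewrite ltnS; exact: IH | exact: ltnW (IH tl pt)].
Qed.

Lemma exists_maximizer T (h : T -> nat) t0 l : exists t, List.In t (t0 :: l) /\
  forall t', List.In t' (t0 :: l) -> h t' <= h t.
Proof.
elim: l t0 => [|t1 l IH] t0.
  by exists t0; split=> [|t' [<-|[]]]; [left|].
have [t [tl tmax]] := IH t1; case: (leqP (h t0) (h t)) => [le_t0t|lt_tt0].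
  by exists t; split=> [|t' [<-//|/tmax//]]; right.
exists t0; split=> [|t' [<-//|/tmax le_t't]]; first by left.
exact: leq_trans le_t't (ltnW lt_tt0).
Qed.

Lemma Zorn_subsets T (P : (T -> Prop) -> Prop) :
  (forall Fs : (T -> Prop) -> Prop, (forall S, Fs S -> P S) ->
     (forall S S', Fs S -> Fs S' -> (forall t, S t -> S' t) \/ (forall t, S' t -> S t)) ->
     P (fun t => exists2 S, Fs S & S t)) ->
  exists A, P A /\ forall B, (forall t, A t -> B t) -> ~ (forall t, B t -> A t) -> ~ P B.
Proof.
move=> chainP; have [A [PA Amax]] := classical_sets.Zorn_bigcup chainP.
by exists A; split=> // B AB BA; apply: Amax; split.
Qed.

Definition is_fo_hom (L : msalg) (W : Type) (f : forall n, car L n -> rel W n) : Prop :=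
  (forall n k (alpha : 'I_n -> 'I_k) (r : car L n),
      f k (sub alpha r) = subst_rel alpha (f n r)) /\
  (forall n, f n (zero n) = (fun _ => False)) /\
  (forall n, f n (one n) = (fun _ => True)) /\
  (forall n (r s : car L n), f n (join r s) = (fun x => f n r x \/ f n s x)) /\
  (forall n (r s : car L n), f n (meet r s) = (fun x => f n r x /\ f n s x)) /\
  (forall n (r : car L n), f n (neg r) = (fun x => ~ f n r x)) /\
  (forall n (r : car L n.+1), f n (ex r) = ex_rel (f n.+1 r)).

Section Completeness.
Variable L : msalg.
Hypotheses (A0 : ax0 L) (A1 : ax1 L) (A2 : ax2 L) (A3 : ax3 L) (A4 : ax4 L)
  (A5 : ax5 L) (A6 : ax6 L) (A7 : ax7 L) (A8 : ax8 L) (A9 : ax9 L) (A10 : ax10 L).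
Local Notation one := (@Defs.one L).
Local Notation zero := (@Defs.zero L).

Section BooleanLaws.
Context {n : nat}.
Implicit Types x y z : car L n.

Lemma joinC x y : join x y = join y x. Proof. by case: (A1 x y x) => _ [] _ []. Qed.
Lemma meetA x y z : meet x (meet y z) = meet (meet x y) z.
Proof. by case: (A1 x y z) => _ []. Qed.
Lemma meetC x y : meet x y = meet y x. Proof. by case: (A1 x y x) => _ [] _ [] _ []. Qed.
Lemma joinKI x y : join x (meet x y) = x.
Proof. by case: (A1 x y x) => _ [] _ [] _ [] _ []. Qed.
Lemma meetKU x y : meet x (join x y) = x.
Proof. by case: (A1 x y x) => _ [] _ [] _ [] _ [] _ []. Qed.
Lemma meetUr x y z : meet x (join y z) = join (meet x y) (meet x z).
Proof. by case: (A1 x y z) => _ [] _ [] _ [] _ [] _ [] _ []. Qed.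
Lemma join0 x : join x (zero n) = x.
Proof. by case: (A1 x x x) => _ [] _ [] _ [] _ [] _ [] _ [] _ []. Qed.
Lemma meet1 x : meet x (one n) = x.
Proof. by case: (A1 x x x) => _ [] _ [] _ [] _ [] _ [] _ [] _ []. Qed.
Lemma joinN x : join x (neg x) = one n. Proof. by case: (A6 x). Qed.
Lemma meetN x : meet x (neg x) = zero n. Proof. by case: (A6 x). Qed.

Lemma meetxx x : meet x x = x. Proof. by rewrite -{2}(joinKI x x) meetKU. Qed.
Lemma meet0 x : meet (zero n) x = zero n.
Proof. by rewrite -{1}(join0 x) joinC meetKU. Qed.
Lemma meetUl x y z : meet (join y z) x = join (meet y x) (meet z x).
Proof. by rewrite meetC meetUr (meetC x) (meetC x). Qed.

Lemma le_refl x : le x x. Proof. by rewrite /le meetxx. Qed.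
Lemma le_trans x y z : le x y -> le y z -> le x z.
Proof. by rewrite /le => xy yz; rewrite {1}xy {1}yz meetA -xy. Qed.
Lemma le_anti x y : le x y -> le y x -> x = y.
Proof. by rewrite /le => xy yx; rewrite xy meetC -yx. Qed.
Lemma meet_lel x y : le (meet x y) x.
Proof. by rewrite /le -meetA (meetC y x) meetA meetxx. Qed.
Lemma meet_ler x y : le (meet x y) y. Proof. rewrite meetC; exact: meet_lel. Qed.
Lemma le_meet x y z : le z x -> le z y -> le z (meet x y).
Proof. by rewrite /le => zx zy; rewrite meetA -zx -zy. Qed.
Lemma join_gel x y : le x (join x y). Proof. by rewrite /le meetKU. Qed.
Lemma join_ger x y : le y (join x y). Proof. rewrite joinC; exact: join_gel. Qed.
Lemma join_le x y z : le x z -> le y z -> le (join x y) z.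
Proof. by rewrite /le => xz yz; rewrite meetUl -xz -yz. Qed.
Lemma le0 x : le (zero n) x. Proof. by rewrite /le meet0. Qed.
Lemma le1 x : le x (one n). Proof. by rewrite /le meet1. Qed.
Lemma le0_eq x : le x (zero n) -> x = zero n.
Proof. by move=> x0; apply: le_anti => //; apply: le0. Qed.
Lemma le1_eq x : le (one n) x -> x = one n.
Proof. by move=> x1; apply: le_anti => //; apply: le1. Qed.
Lemma meet_mono x y x' y' : le x x' -> le y y' -> le (meet x y) (meet x' y').
Proof.
move=> xx' yy'; apply: le_meet; first exact: le_trans (meet_lel _ _) xx'.
exact: le_trans (meet_ler _ _) yy'.
Qed.

Lemma disj_le_neg x y : meet x y = zero n -> le x (neg y).
Proof. by move=> xy; rewrite /le -{1}(meet1 x) -(joinN y) meetUr xy joinC join0. Qed.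
Lemma le_complE x y : le x y <-> meet x (neg y) = zero n.
Proof.
split=> [xy|xy0]; last by rewrite /le -{1}(meet1 x) -(joinN y) meetUr xy0 join0.
by apply: le0_eq; rewrite -(meetN y); apply: meet_mono => //; exact: le_refl.
Qed.
Lemma neg_anti x y : le x y -> le (neg y) (neg x).
Proof.
move=> xy; apply: disj_le_neg; apply: le0_eq; rewrite -(meetN y) meetC.
by apply: meet_mono => //; exact: le_refl.
Qed.
Lemma zero_split x y : meet x y = zero n -> meet x (neg y) = zero n -> x = zero n.
Proof.
move=> xy0 xny0; apply: le0_eq.
by rewrite -(meet1 x) -(joinN y) meetUr xy0 xny0 join0; exact: le_refl.
Qed.
Lemma negs_meet_join x y : meet (neg x) (meet (neg y) (join x y)) = zero n.
Proof.
rewrite meetA meetUr; apply: le0_eq; apply: join_le.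
  by apply: le_trans (meet_mono (meet_lel _ _) (le_refl x)) _; rewrite meetC meetN; exact: le_refl.
by apply: le_trans (meet_mono (meet_ler _ _) (le_refl y)) _; rewrite meetC meetN; exact: le_refl.
Qed.
End BooleanLaws.

Lemma sub0 n k (a : 'I_n -> 'I_k) : sub a (zero n) = zero k.
Proof. by case: (A2 a (zero n) (zero n)). Qed.
Lemma sub1 n k (a : 'I_n -> 'I_k) : sub a (one n) = one k.
Proof. by case: (A2 a (zero n) (zero n)) => _ []. Qed.
Lemma subJ n k (a : 'I_n -> 'I_k) (x y : car L n) :
  sub a (join x y) = join (sub a x) (sub a y).
Proof. by case: (A2 a x y) => _ [] _ []. Qed.
Lemma subM n k (a : 'I_n -> 'I_k) (x y : car L n) :
  sub a (meet x y) = meet (sub a x) (sub a y).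
Proof. by case: (A2 a x y) => _ [] _ []. Qed.
Lemma subN n k (a : 'I_n -> 'I_k) (x : car L n) : sub a (neg x) = neg (sub a x).
Proof. exact: A5. Qed.
Lemma sub_comp k n m (a : 'I_k -> 'I_n) (b : 'I_n -> 'I_m) (r : car L k) :
  sub b (sub a r) = sub (fun i => b (a i)) r.
Proof. by rewrite (A3 a b). Qed.
Lemma sub_id n (x : car L n) : sub (fun i => i) x = x. Proof. exact: A4. Qed.
Lemma eq_sub n k (a b : 'I_n -> 'I_k) (x : car L n) :
  (forall i, a i = b i) -> sub a x = sub b x.
Proof. by move=> ab; congr sub; apply: funext. Qed.
Lemma sub_le n k (a : 'I_n -> 'I_k) (x y : car L n) : le x y -> le (sub a x) (sub a y).
Proof. by rewrite /le => xy; rewrite -subM -xy. Qed.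
Lemma sub_nil n (a b : 'I_0 -> 'I_n) (x : car L 0) : sub a x = sub b x.
Proof. by apply: eq_sub; case. Qed.

Lemma cast_sub p q (e : p = q) k (b : 'I_k -> 'I_p) (x : car L k) :
  ecast i (car L i) e (sub b x) = sub (fun j => cast_ord e (b j)) x.
Proof. by case: q / e; congr sub; apply: funext => j; rewrite cast_ord_id. Qed.
Lemma cast_ex p q (e : p = q) (Y : car L p.+1) :
  ecast i (car L i) e (ex Y) = ex (ecast i (car L i) (congr1 S e) Y).
Proof. by case: q / e. Qed.

Definition lift_last k m (a : 'I_k -> 'I_m) : 'I_k.+1 -> 'I_m.+1 :=
  fun j => match unlift ord_max j with Some j' => cyl (a j') | None => ord_max end.

Lemma lift_last_max k m (a : 'I_k -> 'I_m) : lift_last a ord_max = ord_max.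
Proof. by rewrite /lift_last unlift_none. Qed.
Lemma lift_last_cyl k m (a : 'I_k -> 'I_m) j : lift_last a (cyl j) = cyl (a j).
Proof. by rewrite /lift_last cyl_lift liftK. Qed.

(* Axiom (10) for a single conjunct. *)
Lemma ex_sub k m (a : 'I_k -> 'I_m) (r : car L k.+1) :
  ex (sub (lift_last a) r) = sub a (ex r).
Proof.
have := @A10 m 1 (fun _ => k) (fun _ => a) (fun _ => r).
rewrite /bigmeet !big_ord_recl !big_ord0 !meet1 /= cast_ex !cast_sub => <-.
congr ex; congr sub; apply: funext => j; apply: val_inj.
by rewrite /beta10 /lift_last; case: unliftP => [j'|] _ /=; rewrite ?addn0.
Qed.

Lemma ex0 n : ex (zero n.+1) = zero n. Proof. by case: (A7 (zero n.+1) (zero n.+1)). Qed.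
Lemma ex_eq0 n (x : car L n.+1) : ex x = zero n -> x = zero n.+1.
Proof. by move=> ex0; have := A8 x; rewrite /le ex0 sub0 => ->; rewrite meetC meet0. Qed.

Lemma sort0_cases (x : car L 0) : x = zero 0 \/ x = one 0.
Proof.
pose s (i : 'I_2) : car L 0 := if val i == 0 then x else neg x.
have big2 p (op : car L p -> car L p -> car L p) idx (F : 'I_2 -> car L p) :
    \big[op/idx]_(i < 2) F i = op (F ord0) (op (F (lift ord0 ord0)) idx).
  by rewrite !big_ord_recl big_ord0.
have := @A0 2 (fun _ => 0) (fun _ => one 0) s.
rewrite /bigmeet /bigjoin !big2 /s /= !sub1 !meet1 join0.
rewrite (sub_nil (part_cyl (i := lift ord0 ord0)) (part_cyl (i := ord0))).
rewrite -subJ joinN sub1 => /(_ (le_refl _)) [[[|[|//]]] /= _ one_le].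
  by right; apply: le1_eq.
by left; rewrite -(meetN x) (le1_eq one_le) meet1.
Qed.

Lemma one0_neq0 : one 0 <> zero 0.
Proof.
move=> one0; have := @A0 0 (fun _ => 0) (fun _ => one 0) (fun _ => one 0).
have big0 p (op : car L p -> car L p -> car L p) idx (F : 'I_0 -> car L p) :
  \big[op/idx]_(i < 0) F i = idx by rewrite big_ord0.
rewrite /bigmeet /bigjoin !big0.
have -> : one (\sum_(j < 0) 0) = zero _ by rewrite -(sub1 (@nil_fun _)) one0 sub0.
by case=> [|[]]; rewrite /le meetxx.
Qed.

Lemma one_neq0 : one 1 <> zero 1 -> forall m, one m <> zero m.
Proof.
move=> nondeg [|m] one0; first exact: one0_neq0.
by apply: nondeg; move: (f_equal (sub (fun _ : 'I_m.+1 => ord0 : 'I_1)) one0); rewrite sub1 sub0.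
Qed.

Section Henkin.
Hypothesis nondeg : forall m, one m <> zero m.

Inductive term : Type := Witness n of car L n.+1 & ('I_n -> term).

Fixpoint height (t : term) : nat :=
  let: Witness n _ w := t in (\max_(j < n) height (w j)).+1.

Lemma height_arg n a (w : 'I_n -> term) j : height (w j) < height (Witness a w).
Proof. by rewrite /= ltnS; apply: (@leq_bigmax _ (fun j => height (w j)) j). Qed.

Lemma witness_neq_arg n a (w : 'I_n -> term) j : w j <> Witness a w.
Proof. by move=> e; have := height_arg a w j; rewrite e ltnn. Qed.

(* Position of the first argument equal to the [j]-th one: substituting it
   identifies repeated arguments. *)
Definition first_occ m (u : 'I_m -> term) (j : 'I_m) : 'I_m :=
  [arg min_(i < j | `[< u i = u j >]) (i : nat)].

Lemma first_occ_spec m (u : 'I_m -> term) j :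
  u (first_occ u j) = u j /\ forall i, u i = u j -> first_occ u j <= i.
Proof.
rewrite /first_occ; case: arg_minnP; first exact/asboolP.
by move=> i /asboolP ui imin; split=> // i' /asboolP; apply: imin.
Qed.

Lemma first_occP m (u : 'I_m -> term) j : u (first_occ u j) = u j.
Proof. by case: (first_occ_spec u j). Qed.

Lemma first_occ_unique m (u : 'I_m -> term) j i :
  u i = u j -> (forall i', u i' = u j -> i <= i') -> first_occ u j = i.
Proof.
move=> uij imin; case: (first_occ_spec u j) => _ fmin; apply: ord_inj; apply/eqP.
by rewrite eqn_leq fmin // imin ?first_occP.
Qed.

Lemma first_occ_eq m (u : 'I_m -> term) j1 j2 :
  u j1 = u j2 -> first_occ u j1 = first_occ u j2.
Proof.
move=> e; case: (first_occ_spec u j2) => f2 fmin; apply: first_occ_unique.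
  by rewrite f2.
by move=> i' ui'; apply: fmin; rewrite ui'.
Qed.

Lemma first_occ_ext m (u : 'I_m -> term) c : (forall i, u i <> c) ->
  forall j, first_occ (ext u c) j = lift_last (first_occ u) j.
Proof.
move=> fresh j; apply: first_occ_unique.
  case: (cyl_or_max j) => [->|[j' ->]]; first by rewrite lift_last_max.
  by rewrite lift_last_cyl !ext_cyl first_occP.
case: (cyl_or_max j) => [->|[j' ->]] i; case: (cyl_or_max i) => [->|[i' ->]].
- by rewrite lift_last_max.
- by rewrite lift_last_max ext_max ext_cyl => /fresh.
- by rewrite lift_last_cyl ext_max ext_cyl => c_u; case: (fresh j').
- rewrite lift_last_cyl !ext_cyl => /= u_ij.
  by case: (first_occ_spec u j') => _ /(_ _ u_ij).
Qed.

Definition collapse m (u : 'I_m -> term) (x : car L m) := sub (first_occ u) x.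

Lemma collapse_meet m (u : 'I_m -> term) x y :
  collapse u (meet x y) = meet (collapse u x) (collapse u y).
Proof. exact: subM. Qed.
Lemma collapse_neg m (u : 'I_m -> term) x : collapse u (neg x) = neg (collapse u x).
Proof. exact: subN. Qed.
Lemma collapse_one m (u : 'I_m -> term) : collapse u (one m) = one m.
Proof. exact: sub1. Qed.

(* The nullity of a collapsed element does not depend on the argument list it
   is written over; the case of sort 0 is where [nondeg] is needed. *)
Lemma collapse_sub_eq0 m m' (u : 'I_m -> term) (u' : 'I_m' -> term)
    (s : 'I_m' -> 'I_m) (x : car L m') :
  (forall j, u' j = u (s j)) -> collapse u (sub s x) = zero m <-> collapse u' x = zero m'.
Proof.
rewrite /collapse sub_comp => us; split=> x0.
- case: m' u' s us x x0 => [|m'] u' s us x x0.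
    case: (sort0_cases x) x0 => -> x0; first by rewrite sub0.
    by rewrite sub1 in x0; case: (nondeg x0).
  pose pi (i : 'I_m) : 'I_m'.+1 :=
    first_occ u' (odflt ord0 [pick j | first_occ u (s j) == i]).
  have pi_first j : first_occ u' j = pi (first_occ u (s j)).
    rewrite /pi; case: pickP => [j' /eqP fj|]; last by move/(_ j); rewrite eqxx.
    by apply: first_occ_eq; rewrite !us -(first_occP u (s j)) -fj first_occP.
  by rewrite (eq_sub _ pi_first) -sub_comp x0 sub0.
- have pi_first j : first_occ u (s j) = first_occ u (s (first_occ u' j)).
    by apply: first_occ_eq; rewrite -!us first_occP.
  by rewrite (eq_sub _ pi_first) -(sub_comp _ (fun i => first_occ u (s i))) x0 sub0.
Qed.

Record formula := Formula { arity : nat; body : car L arity; args : 'I_arity -> term }.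
Arguments body : clear implicits.
Arguments args : clear implicits.

Definition refuted F := collapse (args F) (body F) = zero (arity F).

(* [x] is the formula [F] rewritten over the argument list [u]. *)
Definition presents F m (u : 'I_m -> term) (x : car L m) :=
  exists s : 'I_(arity F) -> 'I_m, (forall j, args F j = u (s j)) /\ x = sub s (body F).

Lemma refuted_presents F m (u : 'I_m -> term) x :
  presents F u x -> refuted F <-> collapse u x = zero m.
Proof. by case=> s [us ->]; apply: iff_sym; apply: collapse_sub_eq0. Qed.

Definition fAnd F G :=
  Formula (meet (sub (@lshift (arity F) (arity G)) (body F))
                (sub (@rshift (arity F) (arity G)) (body G)))
          (cat_fun (args F) (args G)).
Definition fNot F := Formula (neg (body F)) (args F).
Definition fTrue := Formula (one 0) (@nil_fun term).
Definition entails F G := refuted (fAnd F (fNot G)).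

Lemma presents_self F : presents F (args F) (body F).
Proof. by exists id; split => //; rewrite sub_id. Qed.

Lemma presents_sub F m m' (u : 'I_m -> term) (u' : 'I_m' -> term) (s : 'I_m' -> 'I_m) x :
  (forall j, u' j = u (s j)) -> presents F u' x -> presents F u (sub s x).
Proof.
move=> us [t [ut ->]]; exists (fun j => s (t j)); split; last by rewrite sub_comp.
by move=> j; rewrite ut us.
Qed.

Lemma presents_and F G m (u : 'I_m -> term) x y :
  presents F u x -> presents G u y -> presents (fAnd F G) u (meet x y).
Proof.
move=> [s [us ->]] [t [ut ->]]; exists (cat_fun s t); split.
  by move=> j; rewrite /= /cat_fun; case: (split j) => i; [exact: us | exact: ut].
rewrite /= subM !sub_comp; congr meet; apply: eq_sub => i.
  by rewrite cat_fun_lshift.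
by rewrite cat_fun_rshift.
Qed.

Lemma presents_not F m (u : 'I_m -> term) x : presents F u x -> presents (fNot F) u (neg x).
Proof. by move=> [s [us ->]]; exists s; split => //; rewrite subN. Qed.

Lemma presents_true m (u : 'I_m -> term) : presents fTrue u (one m).
Proof. by exists (@nil_fun _); split; [case | rewrite /= sub1]. Qed.

Lemma presents_catl F m n (u : 'I_m -> term) (v : 'I_n -> term) x :
  presents F u x -> presents F (cat_fun u v) (sub (@lshift m n) x).
Proof. by apply: presents_sub => j; rewrite cat_fun_lshift. Qed.

Lemma presents_catr F m n (u : 'I_m -> term) (v : 'I_n -> term) x :
  presents F v x -> presents F (cat_fun u v) (sub (@rshift m n) x).
Proof. by apply: presents_sub => j; rewrite cat_fun_rshift. Qed.

Lemma entails_presents F G m (u : 'I_m -> term) x y :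
  presents F u x -> presents G u y -> entails F G <-> le (collapse u x) (collapse u y).
Proof.
move=> Fx Gy; rewrite /entails (refuted_presents (presents_and Fx (presents_not Gy))).
by rewrite collapse_meet collapse_neg; apply: iff_sym; apply: le_complE.
Qed.

Lemma entails_same F G m (u : 'I_m -> term) x :
  presents F u x -> presents G u x -> entails F G.
Proof. by move=> Fx Gx; rewrite (entails_presents Fx Gx); exact: le_refl. Qed.

Lemma entails_refl F : entails F F.
Proof. exact: entails_same (presents_self F) (presents_self F). Qed.

Lemma entails_trans F G H : entails F G -> entails G H -> entails F H.
Proof.
have Fx := presents_catl (args H) (presents_catl (args G) (presents_self F)).
have Gy := presents_catl (args H) (presents_catr (args F) (presents_self G)).
have Hz := presents_catr (cat_fun (args F) (args G)) (presents_self H).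
rewrite (entails_presents Fx Gy) (entails_presents Gy Hz) (entails_presents Fx Hz).
exact: le_trans.
Qed.

Lemma entails_fAndl F G : entails (fAnd F G) F.
Proof.
have Fx := presents_catl (args G) (presents_self F).
have Gy := presents_catr (args F) (presents_self G).
rewrite (entails_presents (presents_and Fx Gy) Fx) collapse_meet; exact: meet_lel.
Qed.

Lemma entails_fAndr F G : entails (fAnd F G) G.
Proof.
have Fx := presents_catl (args G) (presents_self F).
have Gy := presents_catr (args F) (presents_self G).
rewrite (entails_presents (presents_and Fx Gy) Gy) collapse_meet; exact: meet_ler.
Qed.

Lemma entails_fAnd H F G : entails H F -> entails H G -> entails H (fAnd F G).
Proof.
have Fx := presents_catl (args G) (presents_catr (args H) (presents_self F)).
have Gy := presents_catr (cat_fun (args H) (args F)) (presents_self G).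
have Hz := presents_catl (args G) (presents_catl (args F) (presents_self H)).
rewrite (entails_presents Hz Fx) (entails_presents Hz Gy).
rewrite (entails_presents Hz (presents_and Fx Gy)) collapse_meet; exact: le_meet.
Qed.

Lemma entails_fTrue F : entails F fTrue.
Proof.
by rewrite (entails_presents (presents_self F) (presents_true _)) collapse_one; exact: le1.
Qed.

Lemma refuted_entails F G : entails F G -> refuted G -> refuted F.
Proof.
have Fx := presents_catl (args G) (presents_self F).
have Gy := presents_catr (args F) (presents_self G).
rewrite (entails_presents Fx Gy) (refuted_presents Fx) (refuted_presents Gy) => FG G0.
by apply: le0_eq; rewrite -G0.
Qed.

Lemma refuted_fAnd_fNot F : refuted (fAnd F (fNot F)).
Proof.
rewrite (refuted_presents (presents_and (presents_self F) (presents_not (presents_self F)))).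
by rewrite collapse_meet collapse_neg meetN.
Qed.

Lemma refuted_cut G G' F :
  refuted (fAnd G F) -> refuted (fAnd G' (fNot F)) -> refuted (fAnd G G').
Proof.
have Gx := presents_catl (args F) (presents_catl (args G') (presents_self G)).
have G'y := presents_catl (args F) (presents_catr (args G) (presents_self G')).
have Fz := presents_catr (cat_fun (args G) (args G')) (presents_self F).
rewrite (refuted_presents (presents_and Gx Fz)).
rewrite (refuted_presents (presents_and G'y (presents_not Fz))).
rewrite (refuted_presents (presents_and Gx G'y)) !collapse_meet collapse_neg => GF0 G'F0.
apply: (zero_split (y := collapse _ (sub (@rshift _ _) (body F)))); apply: le0_eq.
  by rewrite -GF0 -meetA; apply: meet_mono; [exact: le_refl | exact: meet_ler].
by rewrite -G'F0; apply: meet_mono; [exact: meet_ler | exact: le_refl].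
Qed.

Lemma entails_modus_ponens E S : entails (fAnd (fNot (fAnd E (fNot S))) E) S.
Proof.
have Ex := presents_catl (args S) (presents_self E).
have Sy := presents_catr (args E) (presents_self S).
rewrite (entails_presents (presents_and (presents_not (presents_and Ex (presents_not Sy))) Ex) Sy).
rewrite !collapse_meet !collapse_neg !collapse_meet !collapse_neg.
by apply/le_complE; rewrite -meetA meetC; exact: meetN.
Qed.

(* This is how a fresh Henkin witness is eliminated. *)
Lemma collapse_fresh_eq0 m (u : 'I_m -> term) c (X : car L m.+1) :
  (forall i, u i <> c) -> collapse (ext u c) X = zero m.+1 -> collapse u (ex X) = zero m.
Proof.
move=> fresh; rewrite /collapse (eq_sub _ (first_occ_ext fresh)) => /(congr1 ex).
by rewrite ex_sub ex0.
Qed.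

Definition exformula := {n : nat & (car L n.+1 * ('I_n -> term))%type}.

Definition witness (t : exformula) : term := let: existT _ (a, w) := t in Witness a w.
Definition witness_data (v : term) : exformula := let: Witness n a w := v in Tagged _ (a, w).
Lemma witnessK : cancel witness witness_data. Proof. by case=> n [a w]. Qed.
Lemma witness_inj : injective witness. Proof. exact: can_inj witnessK. Qed.

(* [ex a(w) -> a(w, c)] for the witness [c = Witness a w]. *)
Definition henkin_axiom (t : exformula) : formula :=
  let: existT n (a, w) := t in
  fNot (fAnd (Formula (ex a) w) (fNot (Formula a (ext w (Witness a w))))).

Lemma henkin_axiom_consistent t G : (forall j, args G j <> witness t) ->
  ~ refuted G -> ~ refuted (fAnd (henkin_axiom t) G).
Proof.
case: t => n [a w] /= fresh_G consG; set c := Witness a w in fresh_G *.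
pose u := cat_fun (args G) w.
have fresh_u i : u i <> c.
  by apply: (cat_funP (P := fun v => v <> c)) => // j; exact: witness_neq_arg.
have u_cyl j : u j = ext u c (cyl j) by rewrite ext_cyl.
have Gg := presents_catl w (presents_self G).
have Ee := presents_catr (args G) (presents_self (Formula (ex a) w)).
have Ss : presents (Formula a (ext w c)) (ext u c) (sub (lift_last (@rshift (arity G) n)) a).
  exists (lift_last (@rshift _ n)); split => // j /=.
  case: (cyl_or_max j) => [->|[j' ->]]; first by rewrite lift_last_max !ext_max.
  by rewrite lift_last_cyl !ext_cyl /u cat_fun_rshift.
set g := sub _ (body G) in Gg; set e := sub _ (ex a) in Ee; set s := sub _ a in Ss.
have Hh := presents_not (presents_and (presents_sub u_cyl Ee) (presents_not Ss)).
move/(refuted_presents (presents_and Hh (presents_sub u_cyl Gg))) => H0.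
apply: consG; rewrite (refuted_presents Gg).
have gne0 : collapse u (meet g (neg e)) = zero _.
  rewrite -(collapse_sub_eq0 _ u_cyl) subM subN; apply: le0_eq; rewrite -H0; apply: sub_le.
  by rewrite meetC; apply: meet_mono; [apply: neg_anti; exact: meet_lel | exact: le_refl].
have eg0 : collapse u (meet e g) = zero _.
  have : collapse (ext u c) (meet s (sub (@cyl _) g)) = zero _.
    apply: le0_eq; rewrite -H0; apply: sub_le; apply: meet_mono; last exact: le_refl.
    by apply: disj_le_neg; rewrite meetC -meetA (meetC (neg s)) meetN meetC meet0.
  by move/(collapse_fresh_eq0 fresh_u); rewrite A9 /s ex_sub.
apply: (zero_split (y := collapse u e)); first by rewrite -collapse_meet meetC.
by rewrite -collapse_neg -collapse_meet.
Qed.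

Definition henkin_conj (l : seq exformula) : formula :=
  foldr (fun t F => fAnd (henkin_axiom t) F) fTrue l.

Lemma henkin_conj_In l t : List.In t l -> entails (henkin_conj l) (henkin_axiom t).
Proof.
elim: l => //= t' l IH [<-|tl]; first exact: entails_fAndl.
exact: entails_trans (entails_fAndr _ _) (IH tl).
Qed.

Lemma henkin_conj_incl l1 l2 : (forall t, List.In t l1 -> List.In t l2) ->
  entails (henkin_conj l2) (henkin_conj l1).
Proof.
elim: l1 => [|t l1 IH] l12 /=; first exact: entails_fTrue.
apply: entails_fAnd; first by apply: henkin_conj_In; apply: l12; left.
by apply: IH => t' t'l; apply: l12; right.
Qed.

Lemma henkin_conj_app l1 l2 :
  entails (henkin_conj (l1 ++ l2)) (fAnd (henkin_conj l1) (henkin_conj l2)).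
Proof.
by apply: entails_fAnd; apply: henkin_conj_incl => t tl; apply: List.in_or_app; [left | right].
Qed.

Lemma henkin_conj_args l j : exists2 t, List.In t l &
  args (henkin_conj l) j = witness t \/ height (args (henkin_conj l) j) < height (witness t).
Proof.
elim: l j => [[]//|t l IH] j.
apply: (cat_funP (P := fun v => exists2 t', t = t' \/ List.In t' l &
   v = witness t' \/ height v < height (witness t'))); last first.
  by move=> i; case: (IH i) => t' t'l hi; exists t' => //; right.
move=> {}j; exists t; first by left.
case: t j => n [a w] j /=.
apply: (cat_funP (P := fun v => v = Witness a w \/ height v < height (Witness a w))).
  by move=> i; right; apply: height_arg.
by move=> i; rewrite /ext; case: (unlift ord_max i) => [i'|]; [right; apply: height_arg | left].
Qed.

(* The Henkin axioms are added by decreasing height of their witnesses, so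
   that each new witness is fresh for the axioms already present. *)
Lemma henkin_conj_consistent l : ~ refuted (henkin_conj l).
Proof.
elim: {l}(length l).+1 {-2}l (ltnSn (length l)) => // k IH [|t0 l0] lt_k.
  by rewrite /refuted /= collapse_one; exact: nondeg.
have [t [tl tmax]] := exists_maximizer (fun t => height (witness t)) t0 l0.
pose neq_t t' := ~~ `[< t' = t >].
pose rest := List.filter neq_t (t0 :: l0).
have rest_lt : length rest < k.
  apply: leq_trans (length_filter_lt tl _) _; last by rewrite -ltnS.
  by rewrite /neq_t; apply/negPn/asboolP.
have fresh j : args (henkin_conj rest) j <> witness t.
  case: (henkin_conj_args j) => t' /List.filter_In [t'l /negP neq_t't] [->|lt_t'] e.
    by apply: neq_t't; apply/asboolP; exact: witness_inj e.
  by move: (leq_trans lt_t' (tmax _ t'l)); rewrite e ltnn.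
move=> ref; apply: (henkin_axiom_consistent fresh (IH _ rest_lt)).
apply: refuted_entails ref; apply: (@henkin_conj_incl (t0 :: l0) (t :: rest)) => t' t'l.
case: (pselect (t' = t)) => [->|neq_t't]; [left | right] => //.
by apply/List.filter_In; split=> //; apply/negP => /asboolP.
Qed.

Definition henkin_theorem F := exists l, entails (henkin_conj l) F.

Record henkin_filter (S : formula -> Prop) : Prop := HenkinFilter {
  hfilter_up : forall F G, S F -> entails F G -> S G;
  hfilter_and : forall F G, S F -> S G -> S (fAnd F G);
  hfilter_consistent : forall F, S F -> ~ refuted F;
  hfilter_theorem : forall F, henkin_theorem F -> S F }.

Lemma henkin_theorem_true : henkin_theorem fTrue.
Proof. by exists [::]; exact: entails_refl. Qed.

Lemma henkin_theorem_filter : henkin_filter henkin_theorem.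
Proof.
split=> //.
- by move=> F G [l lF] FG; exists l; exact: entails_trans lF FG.
- move=> F G [l1 l1F] [l2 l2G]; exists (l1 ++ l2).
  apply: entails_trans (henkin_conj_app l1 l2) _; apply: entails_fAnd.
    exact: entails_trans (entails_fAndl _ _) l1F.
  exact: entails_trans (entails_fAndr _ _) l2G.
- by move=> F [l lF] refF; apply: (@henkin_conj_consistent l); exact: refuted_entails lF refF.
Qed.

Lemma henkin_filter_theorems_union S :
  henkin_filter S -> henkin_filter (fun X => henkin_theorem X \/ S X).
Proof.
case=> up and cons thm; split; last by left.
- by move=> F G [/thm|] SF FG; right; exact: up FG.
- by move=> F G [/thm|] SF [/thm|] SG; right; exact: and.
- by move=> F [/thm|]; exact: cons.
Qed.

Lemma henkin_filter_chain (Fs : (formula -> Prop) -> Prop) :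
  (forall S, Fs S -> henkin_filter (fun X => henkin_theorem X \/ S X)) ->
  (forall S S', Fs S -> Fs S' -> (forall t, S t -> S' t) \/ (forall t, S' t -> S t)) ->
  henkin_filter (fun X => henkin_theorem X \/ exists2 S, Fs S & S X).
Proof.
move=> FsP Fs_total; have [up0 and0 cons0 _] := henkin_theorem_filter.
have lift S X : Fs S -> henkin_theorem X \/ S X -> henkin_theorem X \/ exists2 S, Fs S & S X.
  by move=> FsS [|SX]; [left | right; exists S].
split; last by left.
- move=> F G [thF|[S FsS SF]] FG; first by left; exact: up0 FG.
  exact: lift _ _ FsS (hfilter_up (FsP _ FsS) (or_intror SF) FG).
- move=> F G [thF|[S FsS SF]] [thG|[S' FsS' S'G]]; first by left; exact: and0.
  + exact: lift _ _ FsS' (hfilter_and (FsP _ FsS') (or_introl thF) (or_intror S'G)).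
  + exact: lift _ _ FsS (hfilter_and (FsP _ FsS) (or_intror SF) (or_introl thG)).
  + case: (Fs_total _ _ FsS FsS') => [SS'|S'S].
      exact: lift _ _ FsS' (hfilter_and (FsP _ FsS') (or_intror (SS' _ SF)) (or_intror S'G)).
    exact: lift _ _ FsS (hfilter_and (FsP _ FsS) (or_intror SF) (or_intror (S'S _ S'G))).
- by move=> F [/cons0|[S FsS SF]] //; apply: (hfilter_consistent (FsP S FsS)); right.
Qed.

Lemma henkin_filter_adjoin M F : henkin_filter M ->
  (forall G, M G -> ~ refuted (fAnd G F)) ->
  henkin_filter (fun X => exists2 G, M G & entails (fAnd G F) X).
Proof.
case=> up and cons thm consF; split.
- by move=> X Y [G MG GX] XY; exists G => //; exact: entails_trans GX XY.
- move=> X Y [G MG GX] [G' MG' G'Y]; exists (fAnd G G'); first exact: and.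
  apply: entails_fAnd.
    apply: entails_trans GX; apply: entails_fAnd; last exact: entails_fAndr.
    exact: entails_trans (entails_fAndl _ _) (entails_fAndl _ _).
  apply: entails_trans G'Y; apply: entails_fAnd; last exact: entails_fAndr.
  exact: entails_trans (entails_fAndl _ _) (entails_fAndr _ _).
- by move=> X [G MG GX] refX; apply: (consF G MG); exact: refuted_entails GX refX.
- by move=> X thX; exists X; [exact: thm | exact: entails_fAndl].
Qed.

Lemma exists_complete_henkin_filter :
  exists2 M, henkin_filter M & forall F, M F \/ M (fNot F).
Proof.
have [A [PA Amax]] := Zorn_subsets henkin_filter_chain.
pose M X := henkin_theorem X \/ A X.
have [up and cons thm] : henkin_filter M := PA.
have refuter F : ~ M F -> exists2 G, M G & refuted (fAnd G F).
  move=> MF; apply: contrapT => no_ref.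
  pose B X := exists2 G, M G & entails (fAnd G F) X.
  have BP : henkin_filter B.
    by apply: henkin_filter_adjoin PA _ => G MG ref; apply: no_ref; exists G.
  apply: (Amax B _ _ (henkin_filter_theorems_union BP)).
    by move=> X AX; exists X; [right | exact: entails_fAndl].
  move=> BA; apply: MF; right; apply: BA; exists fTrue; last exact: entails_fAndr.
  by left; exact: henkin_theorem_true.
exists M => // F; apply: contrapT => neither.
have [G MG GF] := refuter F (fun MF => neither (or_introl MF)).
have [G' MG' G'F] := refuter (fNot F) (fun MF => neither (or_intror MF)).
by apply: (cons _ (and _ _ MG MG')); exact: refuted_cut GF G'F.
Qed.

Section TermModel.
Variable M : formula -> Prop.
Hypotheses (M_filter : henkin_filter M) (M_complete : forall F, M F \/ M (fNot F)).

Definition holds n (a : car L n) (w : 'I_n -> term) : Prop := M (Formula a w).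

Lemma M_fNot F : M (fNot F) <-> ~ M F.
Proof.
split; last by case: (M_complete F).
move=> MnF MF; apply: (hfilter_consistent M_filter (hfilter_and M_filter MF MnF)).
exact: refuted_fAnd_fNot.
Qed.

Lemma M_le n (r s : car L n) w : le r s -> holds r w -> holds s w.
Proof.
move=> rs /(hfilter_up M_filter); apply.
rewrite (entails_presents (presents_self (Formula r w)) (presents_self (Formula s w))).
exact: sub_le.
Qed.

Lemma holds_sub n k (al : 'I_n -> 'I_k) r w : holds (sub al r) w <-> holds r (fun i => w (al i)).
Proof.
have Sr : presents (Formula r (fun i => w (al i))) w (sub al r) by exists al.
have Ss := presents_self (Formula (sub al r) w).
by split=> /(hfilter_up M_filter); apply; [exact: entails_same Ss Sr | exact: entails_same Sr Ss].
Qed.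

Lemma holds_zero n w : holds (zero n) w <-> False.
Proof.
split=> // /(hfilter_consistent M_filter); apply.
by rewrite /refuted /collapse /= sub0.
Qed.

Lemma holds_one n w : holds (one n) w <-> True.
Proof.
split=> // _; apply: (hfilter_up M_filter (hfilter_theorem M_filter henkin_theorem_true)).
exact: entails_same (presents_true w) (presents_self (Formula (one n) w)).
Qed.

Lemma holds_meet n (r s : car L n) w : holds (meet r s) w <-> holds r w /\ holds s w.
Proof.
split=> [rs|[Mr Ms]].
  by split; apply: M_le rs; [exact: meet_lel | exact: meet_ler].
apply: (hfilter_up M_filter (hfilter_and M_filter Mr Ms)).
have Rr := presents_self (Formula r w); have Ss := presents_self (Formula s w).
exact: entails_same (presents_and Rr Ss) (presents_self (Formula (meet r s) w)).
Qed.

Lemma holds_neg n (r : car L n) w : holds (neg r) w <-> ~ holds r w.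
Proof. exact: (M_fNot (Formula r w)). Qed.

Lemma holds_join n (r s : car L n) w : holds (join r s) w <-> holds r w \/ holds s w.
Proof.
split=> [rs|[Mr|Ms]]; [|exact: M_le (join_gel r s) Mr | exact: M_le (join_ger r s) Ms].
apply: contrapT => nrs.
have nr : holds (neg r) w by apply/holds_neg => ?; apply: nrs; left.
have ns : holds (neg s) w by apply/holds_neg => ?; apply: nrs; right.
have : holds (meet (neg r) (meet (neg s) (join r s))) w.
  by apply/holds_meet; split=> //; apply/holds_meet.
by rewrite negs_meet_join => /holds_zero.
Qed.

Lemma holds_ex n (r : car L n.+1) w : holds (ex r) w <-> exists y, holds r (ext w y).
Proof.
split=> [exr|[y ry]].
  pose t : exformula := Tagged _ (r, w).
  have hax : M (henkin_axiom t).
    by apply: (hfilter_theorem M_filter); exists [:: t]; exact: entails_fAndl.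
  exists (Witness r w).
  have mp := entails_modus_ponens (Formula (ex r) w) (Formula r (ext w (Witness r w))).
  exact (hfilter_up M_filter (hfilter_and M_filter hax exr) mp).
apply: (hfilter_up M_filter ry).
have w_cyl j : w j = ext w y (cyl j) by rewrite ext_cyl.
have Ee := presents_sub w_cyl (presents_self (Formula (ex r) w)).
rewrite (entails_presents (presents_self (Formula r (ext w y))) Ee).
exact: sub_le (A8 r).
Qed.

Lemma holds_fo_hom : is_fo_hom holds.
Proof.
have relE m (P Q : rel term m) : (forall w, P w <-> Q w) -> P = Q.
  by move=> PQ; apply: funext => w; apply: propext.
split; [|split; [|split; [|split; [|split; [|split]]]]] => *; apply: relE => w.
- exact: holds_sub.
- exact: holds_zero.
- exact: holds_one.
- exact: holds_join.
- exact: holds_meet.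
- exact: holds_neg.
- exact: holds_ex.
Qed.

End TermModel.

Lemma term_model : exists f : forall n, car L n -> rel term n, is_fo_hom f.
Proof.
have [M M_filter M_complete] := exists_complete_henkin_filter.
by exists (holds M); exact: holds_fo_hom.
Qed.

End Henkin.

Lemma fo_hom_nonzero W (f : forall n, car L n -> rel W n) : is_fo_hom f ->
  forall n (a : car L n), a <> zero n -> exists w, f n a w.
Proof.
case=> _ [_ [f_one [_ [_ [_ f_ex]]]]]; elim=> [|n IH] a a_neq0.
  by case: (sort0_cases a) => a_eq //; exists (@nil_fun W); rewrite a_eq f_one.
have /IH [w] : ex a <> zero n by move/ex_eq0.
by rewrite f_ex => -[y fy]; exists (ext w y).
Qed.

Lemma fo_hom_inj W (f : forall n, car L n -> rel W n) : is_fo_hom f ->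
  forall n (r s : car L n), f n r = f n s -> r = s.
Proof.
move=> hom n r s frs.
have diff0 x y : f n x = f n y -> meet x (neg y) = zero n.
  move=> fxy; apply: contrapT => /(fo_hom_nonzero hom) [w].
  by case: hom => _ [_ [_ [_ [f_meet [f_neg _]]]]]; rewrite f_meet f_neg fxy; case.
by apply: le_anti; apply/le_complE; apply: diff0.
Qed.

Lemma neg0 : neg (zero 0) = one 0. Proof. by rewrite -(joinN (zero 0)) joinC join0. Qed.
Lemma neg1 : neg (one 0) = zero 0. Proof. by rewrite -(meetN (one 0)) meetC meet1. Qed.

Lemma sort0_join_eq1 (r s : car L 0) : join r s = one 0 <-> r = one 0 \/ s = one 0.
Proof.
split=> [rs|[->|->]]; last 2 first.
- by apply: le1_eq; exact: join_gel.
- by apply: le1_eq; exact: join_ger.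
by case: (sort0_cases r) rs => -> rs; [rewrite joinC join0 in rs; right | left].
Qed.

Lemma sort0_meet_eq1 (r s : car L 0) : meet r s = one 0 <-> r = one 0 /\ s = one 0.
Proof.
split=> [rs|[-> ->]]; last exact: meetxx.
by split; apply: le1_eq; rewrite -rs; [exact: meet_lel | exact: meet_ler].
Qed.

Lemma sort0_neg_eq1 (r : car L 0) : neg r = one 0 <-> r <> one 0.
Proof.
case: (sort0_cases r) => ->; rewrite ?neg0 ?neg1.
  by split=> // _ e; case: one0_neq0; rewrite e.
by split=> [e|ne]; [case: one0_neq0; rewrite e | case: ne].
Qed.

(* Every positive sort is trivial, and the empty set has only one nonempty power. *)
Lemma empty_model : one 1 = zero 1 ->
  is_fo_hom (fun n (a : car L n) (_ : 'I_n -> False) => a = one n).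
Proof.
move=> deg; have relE m (P Q : rel False m) : (forall w, P w <-> Q w) -> P = Q.
  by move=> PQ; apply: funext => w; apply: propext.
split; [|split; [|split; [|split; [|split; [|split]]]]].
- move=> n k al r; apply: relE => w; case: k al w => [|k] al w; last by case: (w ord0).
  case: n al r => [|n] al r; last by case: (al ord0).
  by rewrite /subst_rel (sub_nil al id) sub_id.
- move=> n; apply: relE => w; case: n w => [|n] w; last by case: (w ord0).
  by split=> // e; case: one0_neq0; rewrite e.
- by move=> n; apply: relE.
- move=> n r s; apply: relE => w; case: n w r s => [|n] w r s; last by case: (w ord0).
  exact: sort0_join_eq1.
- move=> n r s; apply: relE => w; case: n w r s => [|n] w r s; last by case: (w ord0).
  exact: sort0_meet_eq1.
- move=> n r; apply: relE => w; case: n w r => [|n] w r; last by case: (w ord0).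
  exact: sort0_neg_eq1.
- move=> n r; apply: relE => w; case: n w r => [|n] w r; last by case: (w ord0).
  rewrite (_ : r = zero 1) ?ex0; last by rewrite -(meet1 r) deg meetC meet0.
  by split=> [e|[]//]; case: one0_neq0; rewrite e.
Qed.

Lemma fo_axioms_represented : represents_in_FO_algebra L.
Proof.
case: (pselect (one 1 = zero 1)) => [deg|nondeg].
  have hom := empty_model deg.
  by eexists; eexists; split; [exact: fo_hom_inj hom | exact: hom].
have [f hom] := term_model (one_neq0 nondeg).
by exists term, f; split; [exact: fo_hom_inj hom | exact: hom].
Qed.

End Completeness.

Theorem theorem4p5 (L : msalg) :
  fo_axioms L <-> represents_in_FO_algebra L.
Proof.
split=> [[A0 [A1 [A2 [A3 [A4 [A5 [A6 [A7 [A8 [A9 A10]]]]]]]]]]|[W [f f_emb]]].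
  exact: fo_axioms_represented.
exact: embedding_fo_axioms f_emb.
Qed.
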